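(* Let $G$ be a connected $(c,d)$-biregular simple graph with $n$ vertices and $m$ edges, and let $\lambda_1\ge\lambda_2\ge\cdots\ge\lambda_n$ be its adjacency eigenvalues (so $\lambda_1=\sqrt{cd}$). Then the Kemeny's constant of the simple random walk on the edge space of $G$ is \[ \mathscr{K}_e(G)=2m-n+\sum_{i=2}^{n}\frac{\sqrt{cd}}{\sqrt{cd}-\lambda_i}. \]
   Context: A $(c,d)$-biregular graph is a bipartite graph in which every vertex in one part of the bipartition has degree $c$ and every vertex in the other part has degree $d$. Kemeny's constant of an irreducible finite Markov chain with transition matrix $P$ whose eigenvalues (with multiplicity) are $1=\rho_1,\rho_2,\dots,\rho_N$ (with $1$ simple) is $\mathscr{K}(P)=\sum_{i=2}^{N}\frac{1}{1-\rho_i}$. $\mathscr{K}_e(G)$ is Kemeny's constant of the simple random walk on the arcs of $G$ (the ordered pairs $(u,v)$ with $\{u,v\}$ an edge), where from $(u,v)$ one moves to $(v,w)$ with probability $1/\deg(v)$ for each neighbor $w$ of $v$. *)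

From HB Require Import structures.
From mathcomp Require Import all_boot all_order all_algebra all_field.
Set Implicit Arguments. Unset Strict Implicit. Unset Printing Implicit Defensive.
Import Order.TTheory GRing.Theory Num.Theory.
Local Open Scope ring_scope.

Section Graphs.
Variables (V : finType) (e : rel V).

Definition simple_graph : Prop := symmetric e /\ irreflexive e.

Definition connected_graph : Prop := forall u v : V, connect e u v.

Definition gdeg (v : V) : nat := #|[set w | e v w]|.

Definition biregular (c d : nat) : Prop :=
  exists S : {set V},
    [/\ forall u v, e u v -> (u \in S) = (v \notin S),
        forall u, u \in S -> gdeg u = c
      & forall u, u \notin S -> gdeg u = d].

Definition edge_set : {set {set V}} :=
  [set E : {set V} | [exists u, exists v, e u v && (E == [set u; v])]].

Definition arcs : {set V * V} := [set x : V * V | e x.1 x.2].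

Definition arc_of (i : 'I_#|arcs|) : V * V := @enum_val _ (mem arcs) i.

(* transition matrix of the simple random walk on arcs:
   (u,v) -> (v,w) with probability 1/deg v *)
Definition arc_walk : 'M[algC]_#|arcs| :=
  \matrix_(i, j) (if (arc_of i).2 == (arc_of j).1
                  then (gdeg (arc_of i).2)%:R^-1 else 0).

Definition adjacency : 'M[algC]_#|V| :=
  \matrix_(i, j) (e (enum_val i) (enum_val j))%:R.

End Graphs.

Definition eigen_list (N : nat) (M : 'M[algC]_N) (rs : seq algC) : Prop :=
  char_poly M = \prod_(r <- rs) ('X - r%:P).

(* Kemeny's constant computed from an eigenvalue list rho_1 = 1, rho_2, ..., rho_N *)
Definition kemeny_of_eigs (rs : seq algC) : algC :=
  \sum_(1 <= i < size rs) (1 - rs`_i)^-1.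

From HB Require Import structures.
From mathcomp Require Import all_boot all_order all_algebra all_field.
Import Order.TTheory GRing.Theory Num.Theory.
Local Open Scope ring_scope.
Set Implicit Arguments. Unset Strict Implicit. Unset Printing Implicit Defensive.

(* The arc walk factors as H P, where H sends an arc to its head and P moves from a
   vertex to a uniformly chosen outgoing arc; P H = D^-1 A is the simple random walk on
   vertices.  By Sylvester's determinant identity, sqrt(cd) (H P) and sqrt(cd) (P H)
   have the same characteristic polynomial up to a power of X, i.e. the same spectrum
   up to 2m - n zeros.  For a (c,d)-biregular graph, sqrt(cd) D^-1 A is similar to A
   through the diagonal weight equal to c on one side and sqrt(cd) on the other, and
   this weight is a positive eigenvector of A, so that lambda_1 = sqrt(cd).  Summing
   x |-> 1/(1 - x/sqrt(cd)) over both padded spectra gives the formula. *)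

Lemma det_scalar_sub_mulmxC (R : comNzRingType) (m n : nat)
    (A : 'M[R]_(m, n)) (B : 'M[R]_(n, m)) (x : R) :
  x ^+ n * \det (x%:M - A *m B) = x ^+ m * \det (x%:M - B *m A).
Proof.
pose C := block_mx (x%:M : 'M_m) A B (1%:M : 'M_n).
have CL : block_mx 1%:M 0 (- B) x%:M *m C = block_mx x%:M A 0 (x%:M - B *m A).
  rewrite mulmx_block !mul1mx !mul0mx !addr0 mulmx1.
  by rewrite mul_mx_scalar mul_scalar_mx mulNmx scalerN addNr addrC.
have CR : C *m block_mx 1%:M 0 (- B) 1%:M = block_mx (x%:M - A *m B) A 0 1%:M.
  by rewrite mulmx_block !mulmx1 !mulmx0 !add0r mul1mx mulmxN subrr.
have := congr1 determinant CL; rewrite det_mulmx det_lblock det_ublock det1 mul1r !det_scalar.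
by have := congr1 determinant CR; rewrite det_mulmx det_lblock det_ublock !det1 !mulr1 => -> ->.
Qed.

Lemma char_poly_mulmxC (R : comNzRingType) (m n : nat)
    (A : 'M[R]_(m, n)) (B : 'M[R]_(n, m)) :
  'X ^+ n * char_poly (A *m B) = 'X ^+ m * char_poly (B *m A).
Proof. by rewrite /char_poly /char_poly_mx !map_mxM det_scalar_sub_mulmxC. Qed.

Lemma char_poly_similar (R : idomainType) (n : nat) (A B P : 'M[R]_n) :
  P \in unitmx -> A *m P = P *m B -> char_poly A = char_poly B.
Proof.
move=> Punit AP_PB; have XnI := mulfI (expf_neq0 n (negbT (polyX_eq0 R))).
apply: XnI; have -> : A = P *m (B *m invmx P) by rewrite mulmxA -AP_PB mulmxK.
by rewrite char_poly_mulmxC mulmxKV.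
Qed.

Lemma size_eigen_list (n : nat) (M : 'M[algC]_n) (rs : seq algC) :
  eigen_list M rs -> size rs = n.
Proof. by move=> Mrs; have := size_char_poly M; rewrite Mrs size_prod_XsubC => -[]. Qed.

Lemma eigen_list_scale (n : nat) (M : 'M[algC]_n) (rs : seq algC) (a : algC) :
  a != 0 -> eigen_list M rs -> eigen_list (a *: M) (map ( *%R a) rs).
Proof.
rewrite /eigen_list /char_poly => a_neq0 Mrs.
pose q : {poly algC} := a^-1%:P * 'X.
have aq : a%:P * q = 'X by rewrite mulrA -polyCM mulfV // mul1r.
have -> : char_poly_mx (a *: M) = a%:P *: map_mx (comp_poly q) (char_poly_mx M).
  apply/matrixP => i j; rewrite !mxE comp_polyB comp_polyC mulrBr -polyCM; congr (_ - _).
  by case: (i == j); rewrite ?mulr1n ?mulr0n ?comp_poly0 ?mulr0 // comp_polyX.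
rewrite detZ det_map_mx Mrs rmorph_prod -(size_eigen_list Mrs).
rewrite -count_predT -iter_mulr_1 -big_const_seq -big_split big_map /=.
by apply: eq_bigr => r _; rewrite comp_polyB comp_polyX comp_polyC mulrBr aq -polyCM.
Qed.

Lemma prod_XsubC_nseq0 (R : nzRingType) (k : nat) :
  \prod_(r <- nseq k (0 : R)) ('X - r%:P) = 'X ^+ k.
Proof. by rewrite big_nseq subr0 iter_mulr_1. Qed.

Lemma perm_eq_eigen_list_padded (m n : nat) (A : 'M[algC]_m) (B : 'M[algC]_n)
    (rs qs : seq algC) :
  'X ^+ n * char_poly A = 'X ^+ m * char_poly B ->
  eigen_list A rs -> eigen_list B qs -> perm_eq (nseq n 0 ++ rs) (nseq m 0 ++ qs).
Proof.
move=> AB Ars Bqs; apply: prod_XsubC_eq.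
by rewrite !big_cat /= !prod_XsubC_nseq0 -Ars -Bqs.
Qed.

Lemma eigenvalue_symmetric_col (F : fieldType) (n : nat) (A : 'M[F]_n) (x : 'cV[F]_n)
    (s : F) :
  A^T = A -> x != 0 -> A *m x = s *: x -> eigenvalue A s.
Proof.
move=> A_sym x_neq0 Ax; apply/eigenvalueP; exists x^T; last by rewrite trmx_eq0.
by rewrite -[in LHS]A_sym -trmx_mul Ax linearZ.
Qed.

Lemma eigenvalue_norm_le (C : numFieldType) (n : nat) (A : 'M[C]_n) (x : 'cV[C]_n)
    (s a : C) :
  (forall i j, 0 <= A i j) -> (forall i, 0 < x i 0) -> A *m x = s *: x ->
  eigenvalue A a -> `|a| <= s.
Proof.
move=> A_ge0 x_gt0 Ax /eigenvalueP [v va v_neq0].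
have va_le l : `|a| * `|v 0 l| <= \sum_k `|v 0 k| * A k l.
  have := congr1 (fun w : 'rV_n => `|w 0 l|) va; rewrite /= !mxE normrM => <-.
  apply: le_trans (ler_norm_sum _ _ _) _; apply: ler_sum => k _.
  by rewrite normrM (ger0_norm (A_ge0 _ _)).
pose Q := \sum_l `|v 0 l| * x l 0.
have Q_gt0 : 0 < Q.
  have [k vk_neq0] : exists k, v 0 k != 0.
    apply/existsP; rewrite -negb_forall; apply: contra v_neq0 => /forallP v0.
    by apply/eqP/matrixP => i j; rewrite (ord1 i) mxE; apply/eqP/v0.
  rewrite /Q (bigD1 k) //=; apply: ltr_pwDl; first by rewrite mulr_gt0 ?normr_gt0.
  by apply: sumr_ge0 => i _; rewrite mulr_ge0 ?normr_ge0 ?ltW.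
rewrite -(ler_pM2r Q_gt0) /Q !mulr_sumr.
apply: (@le_trans _ _ (\sum_l (\sum_k `|v 0 k| * A k l) * x l 0)).
  by apply: ler_sum => l _; rewrite mulrA ler_pM2r ?x_gt0 ?va_le.
under eq_bigr do rewrite mulr_suml; rewrite exchange_big /=.
apply: ler_sum => k _; have := congr1 (fun y : 'cV_n => y k 0) Ax.
rewrite !mxE mulrCA => <-; rewrite mulr_sumr.
by under eq_bigr do rewrite -mulrA.
Qed.

Lemma sorted_nth0_eq_norm_max (R : numDomainType) (s : R) (lam : seq R) :
  sorted (fun x y => y <= x) lam -> s \in lam -> (forall x, x \in lam -> `|x| <= s) ->
  lam`_0 = s.
Proof.
case: lam => [//|x0 lam] /= lam_sorted s_in norm_le.
have ge_trans : transitive (fun x y : R => y <= x) by move=> y x z xy yz; apply: le_trans yz xy.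
have s_le_x0 : s <= x0.
  move: s_in; rewrite in_cons => /predU1P [-> //|s_in].
  exact: allP (order_path_min ge_trans lam_sorted) s s_in.
have x0_ge0 : 0 <= x0 by apply: le_trans s_le_x0; apply: le_trans (norm_le s s_in).
apply/eqP; rewrite eq_le s_le_x0 andbT -(ger0_norm x0_ge0); exact/norm_le/mem_head.
Qed.

Lemma sum_from1_nth (T : Type) (R : nmodType) (x0 : T) (s : seq T) (F : T -> R) :
  F (nth x0 s 0) = 0 -> \sum_(1 <= i < size s) F (nth x0 s i) = \sum_(x <- s) F x.
Proof.
case: s => [|x s] /= Fx; first by rewrite big_geq // big_nil.
by rewrite big_cons Fx add0r big_add1 /= (big_nth x0).
Qed.

Lemma perm_padded_sum_inv (F : fieldType) (s : F) (m n : nat) (rho lam : seq F) :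
  s != 0 -> perm_eq (nseq n 0 ++ map ( *%R s) rho) (nseq m 0 ++ lam) ->
  \sum_(r <- rho) (1 - r)^-1 = m%:R - n%:R + \sum_(x <- lam) s / (s - x).
Proof.
move=> s_neq0 rho_lam; pose h x := (1 - x / s)^-1.
have : \sum_(x <- nseq n 0 ++ map ( *%R s) rho) h x = \sum_(x <- nseq m 0 ++ lam) h x.
  exact: perm_big.
rewrite !big_cat !big_nseq !iter_addr_0 big_map /h mul0r subr0 invr1 => sum_eq.
have -> : \sum_(r <- rho) (1 - r)^-1 = \sum_(r <- rho) (1 - s * r / s)^-1.
  by apply: eq_bigr => r _; rewrite mulrC mulKf.
have -> : \sum_(x <- lam) s / (s - x) = \sum_(x <- lam) (1 - x / s)^-1.
  by apply: eq_bigr => x _; rewrite -(divff s_neq0) -mulrBl invf_div.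
by rewrite -(addKr n%:R (\sum_(r <- rho) _)) sum_eq addrCA addrA.
Qed.

Lemma sumr_eq_pick (R : pzSemiRingType) (T : finType) (A : {pred T}) (y : T) (G : T -> R) :
  \sum_(x in A) (x == y)%:R * G x = (y \in A)%:R * G y.
Proof.
rewrite big_mkcond (bigD1 y) //= big1 ?addr0 => [|x /negPf x_neq_y]; last first.
  by rewrite x_neq_y mul0r if_same.
by rewrite eqxx mul1r; case: (y \in A); rewrite ?mul1r ?mul0r.
Qed.

Lemma card_arcs (V : finType) (e : rel V) :
  symmetric e -> irreflexive e -> #|arcs e| = (2 * #|edge_set e|)%N.
Proof.
move=> e_sym e_irr.
rewrite -sum1_card (partition_big (fun x : V * V => [set x.1; x.2]) (mem (edge_set e))) /=;
  last first.
  move=> [u v]; rewrite !inE /= => euv.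
  by apply/existsP; exists u; apply/existsP; exists v; rewrite euv eqxx.
rewrite mulnC -sum_nat_const; apply: eq_bigr => E.
rewrite inE => /existsP [u /existsP [v /andP [euv /eqP ->]]].
have u_neq_v : u != v by apply: contraTneq euv => ->; rewrite e_irr.
rewrite sum1_card (_ : 2 = #|[set (u, v); (v, u)]|)%N; last first.
  by rewrite cards2 xpair_eqE (negbTE u_neq_v).
apply: eq_card => -[x y]; rewrite !inE /= !xpair_eqE unfold_in /= inE /=.
apply/andP/orP => [[exy /eqP uv_xy]|[]/andP[/eqP-> /eqP->]]; last 2 first.
- by rewrite euv.
- by rewrite e_sym euv setUC.
have : x != y by apply: contraTneq exy => ->; rewrite e_irr.
have /set2P[-> | ->] : x \in [set u; v] by rewrite -uv_xy set21.
all: have /set2P[-> | ->] : y \in [set u; v] by rewrite -uv_xy set22.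
all: rewrite ?eqxx // => _; by [left | right].
Qed.

Section ArcWalkFactorization.
Variables (V : finType) (e : rel V).

Definition arc_head : 'M[algC]_(#|arcs e|, #|V|) :=
  \matrix_(i, k) ((arc_of i).2 == enum_val k)%:R.

Definition out_arc_step : 'M[algC]_(#|V|, #|arcs e|) :=
  \matrix_(k, j) ((enum_val k == (arc_of j).1)%:R / (gdeg e (enum_val k))%:R).

Definition vertex_walk : 'M[algC]_#|V| :=
  \matrix_(k, l) ((e (enum_val k) (enum_val l))%:R / (gdeg e (enum_val k))%:R).

Lemma mul_arc_head_out_arc_step : arc_head *m out_arc_step = arc_walk e.
Proof.
apply/matrixP => i j; rewrite !mxE.
transitivity (\sum_(x in V) (x == (arc_of i).2)%:R *
                ((x == (arc_of j).1)%:R / (gdeg e x)%:R : algC)).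
  by rewrite [RHS]big_enum_val; apply: eq_bigr => k _; rewrite !mxE eq_sym.
rewrite sumr_eq_pick inE mul1r.
by case: eqP => _; rewrite ?mul1r ?mul0r.
Qed.

Lemma mul_out_arc_step_arc_head : out_arc_step *m arc_head = vertex_walk.
Proof.
apply/matrixP => k l; rewrite !mxE.
set u := enum_val k; set v := enum_val l.
transitivity (\sum_(x in arcs e) (x == (u, v))%:R * (gdeg e u)%:R^-1 : algC).
  rewrite [RHS]big_enum_val; apply: eq_bigr => j _; rewrite !mxE -/(arc_of j).
  case: (arc_of j) => x y /=; rewrite xpair_eqE (eq_sym u).
  by case: (x == u); case: (y == v); rewrite ?mulr1 ?mul1r ?mulr0 ?mul0r.
by rewrite sumr_eq_pick inE.
Qed.

Lemma sum_adjacent (u : V) : \sum_x (e u x)%:R = (gdeg e u)%:R :> algC.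
Proof.
rewrite /gdeg -sum1_card natr_sum [RHS]big_mkcond /=.
by apply: eq_bigr => x _; rewrite inE; case: (e u x).
Qed.

Lemma vertex_walk_stochastic :
  (forall u, 0 < gdeg e u)%N -> vertex_walk *m const_mx 1 = const_mx 1 :> 'cV_#|V|.
Proof.
move=> deg_gt0; apply/matrixP => k i; rewrite !mxE.
under eq_bigr do rewrite !mxE mulr1.
rewrite -mulr_suml.
have -> : \sum_(l < #|V|) (e (enum_val k) (enum_val l))%:R = (gdeg e (enum_val k))%:R :> algC.
  by rewrite -(sum_adjacent (enum_val k)) [RHS]big_enum_val.
by rewrite divff // pnatr_eq0 -lt0n deg_gt0.
Qed.

End ArcWalkFactorization.

Section Biregular.
Variables (V : finType) (e : rel V) (c d : nat) (S : {set V}).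
Hypotheses (e_sym : symmetric e)
  (S_bipartition : forall u v, e u v -> (u \in S) = (v \notin S))
  (deg_S : forall u, u \in S -> gdeg e u = c)
  (deg_notS : forall u, u \notin S -> gdeg e u = d)
  (c_gt0 : (0 < c)%N) (d_gt0 : (0 < d)%N).

Let s : algC := sqrtC (c * d)%:R.

Lemma sqrt_cd_gt0 : 0 < s.
Proof. by rewrite sqrtC_gt0 ltr0n muln_gt0 c_gt0. Qed.

Lemma bireg_deg_gt0 u : (0 < gdeg e u)%N.
Proof. by case: (boolP (u \in S)) => [/deg_S | /deg_notS] ->. Qed.

Definition bireg_weight (x : V) : algC := if x \in S then c%:R else s.

Lemma bireg_weight_gt0 x : 0 < bireg_weight x.
Proof. by rewrite /bireg_weight; case: ifP => _; rewrite ?ltr0n ?sqrt_cd_gt0. Qed.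

Lemma bireg_weight_edge u v :
  e u v -> bireg_weight v * (gdeg e u)%:R = s * bireg_weight u.
Proof.
move=> euv; rewrite /bireg_weight; have := S_bipartition euv.
case: (boolP (u \in S)) => [uS /esym/negbTE -> | uS /esym/negbFE ->].
  by rewrite deg_S // mulrC.
by rewrite deg_notS // -natrM -[RHS]expr2 sqrtCK.
Qed.

Definition weight_mx : 'M[algC]_#|V| := diag_mx (\row_k bireg_weight (enum_val k)).

Lemma weight_mx_unit : weight_mx \in unitmx.
Proof.
rewrite unitmxE det_diag unitfE; apply/prodf_neq0 => k _.
by rewrite mxE gt_eqF ?bireg_weight_gt0.
Qed.

Lemma adjacency_weight_mx : adjacency e *m weight_mx = weight_mx *m (s *: vertex_walk e).
Proof.
apply/matrixP => k l; rewrite mul_mx_diag mul_diag_mx !mxE.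
case: (boolP (e (enum_val k) (enum_val l))) => [ekl | _]; last by rewrite !(mul0r, mulr0).
rewrite !mul1r mulrA [_ * s]mulrC -(bireg_weight_edge ekl) mulfK //.
by rewrite pnatr_eq0 -lt0n bireg_deg_gt0.
Qed.

Lemma char_poly_arc_walk_bireg :
  'X ^+ #|V| * char_poly (s *: arc_walk e) = 'X ^+ #|arcs e| * char_poly (adjacency e).
Proof.
rewrite (char_poly_similar weight_mx_unit adjacency_weight_mx).
rewrite -mul_arc_head_out_arc_step -mul_out_arc_step_arc_head scalemxAr scalemxAl.
exact: char_poly_mulmxC.
Qed.

Let weight_col : 'cV[algC]_#|V| := weight_mx *m const_mx 1.

Lemma adjacency_weight_col : adjacency e *m weight_col = s *: weight_col.
Proof.
by rewrite mulmxA adjacency_weight_mx -mulmxA -scalemxAl vertex_walk_stochastic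
  ?scalemxAr // => u; apply: bireg_deg_gt0.
Qed.

Lemma weight_col_gt0 k : 0 < weight_col k 0.
Proof. by rewrite /weight_col mul_diag_mx !mxE mulr1 bireg_weight_gt0. Qed.

Lemma bireg_eigenvalue_norm_le a : eigenvalue (adjacency e) a -> `|a| <= s.
Proof.
apply: eigenvalue_norm_le adjacency_weight_col => [i j|]; last exact: weight_col_gt0.
by rewrite mxE ler0n.
Qed.

Lemma bireg_eigenvalue_sqrt : (0 < #|V|)%N -> eigenvalue (adjacency e) s.
Proof.
move=> V_gt0; apply: eigenvalue_symmetric_col adjacency_weight_col.
  by apply/matrixP => k l; rewrite !mxE e_sym.
apply/eqP => /matrixP /(_ (Ordinal V_gt0) 0) /eqP.
by rewrite [X in _ == X]mxE gt_eqF ?weight_col_gt0.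
Qed.

End Biregular.

Theorem lemma4p1 (V : finType) (e : rel V) (c d : nat)
  (rho lam : seq algC) :
  simple_graph e -> connected_graph e -> biregular e c d ->
  (0 < c)%N -> (0 < d)%N -> (0 < #|V|)%N ->
  (* rho_1 = 1, rho_2, ..., rho_N : eigenvalues of the arc walk *)
  eigen_list (arc_walk e) rho -> rho`_0 = 1 ->
  (* lambda_1 >= ... >= lambda_n : adjacency eigenvalues *)
  eigen_list (adjacency e) lam -> sorted (fun x y => y <= x) lam ->
  kemeny_of_eigs rho =
    (2 * #|edge_set e|)%:R - (#|V|)%:R +
    \sum_(1 <= i < #|V|)
       sqrtC (c * d)%:R / (sqrtC (c * d)%:R - lam`_i).
Proof.
move=> [e_sym e_irr] _ [S [S_bip deg_S deg_notS]] c_gt0 d_gt0 V_gt0.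
move=> Wrho rho0 Alam lam_sorted; set s := sqrtC (c * d)%:R.
have s_neq0 : s != 0 by rewrite gt_eqF ?(sqrt_cd_gt0 c_gt0 d_gt0).
have lamE x : (x \in lam) = eigenvalue (adjacency e) x.
  by rewrite eigenvalue_root_char Alam root_prod_XsubC.
have lam0 : lam`_0 = s.
  apply: sorted_nth0_eq_norm_max lam_sorted _ _.
    by rewrite lamE (bireg_eigenvalue_sqrt e_sym S_bip deg_S deg_notS c_gt0 d_gt0).
  move=> x; rewrite lamE; exact: (bireg_eigenvalue_norm_le S_bip deg_S deg_notS c_gt0 d_gt0).
have rho_lam := perm_eq_eigen_list_padded
  (char_poly_arc_walk_bireg S_bip deg_S deg_notS c_gt0 d_gt0)
  (eigen_list_scale s_neq0 Wrho) Alam.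
rewrite /kemeny_of_eigs (sum_from1_nth (F := fun r => (1 - r)^-1)) ?rho0 ?subrr ?invr0 //.
rewrite (perm_padded_sum_inv s_neq0 rho_lam) card_arcs // -(size_eigen_list Alam).
by rewrite (sum_from1_nth (F := fun x => s / (s - x))) // lam0 subrr invr0 mulr0.
Qed.
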